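(* Let $\gamma_{\mathrm f} > 1$. Then the inequality \[ \prod_{i=1,2} \frac{1}{N_i} \frac{|\sin(N_i \bar{z}_i / 2)|}{|\sin(\bar{z}_i / 2)|} \geq \frac{1}{\sqrt{\gamma_{\mathrm f}}} \] holds whenever $\bar{z}_i\in\left[-\frac{2}{N_i} \alpha^{*}, \frac{2}{N_i} \alpha^{*}\right]$ for both $i = 1,2$. Here, $\alpha^{*}$ is the unique root of the equation \[ \frac{\sin(\alpha)}{\alpha} = \frac{1}{\sqrt[4]{\gamma_{\mathrm f}}} \] within the range $[0, \pi]$.
   Context: Consider an $N_1 \times N_2$ uniform rectangular antenna array (URA) with horizontal and vertical inter-element spacings $d_1, d_2$ and wavelength $\lambda$. A steering vector is aimed at direction $(\theta_x,\theta_y)$ (angles measured relative to the x- and y-axes), while the incident ray arrives from $(\theta_x+\Delta_x,\theta_y+\Delta_y)$. The resulting phase deviations are $\bar{z}_1 = \frac{2\pi}{\lambda}d_1[\sin(\theta_x+\Delta_x) - \sin(\theta_x)]$ and $\bar{z}_2 = \frac{2\pi}{\lambda}d_2[\sin(\theta_y+\Delta_y) - \sin(\theta_y)]$, and the ratio of achievable to maximum array gain is $\left(\prod_{i=1}^2\frac{1}{N_i}\frac{\sin(N_i\bar{z}_i/2)}{\sin(\bar{z}_i/2)}\right)^2$. The degradation factor threshold is $\gamma_{\mathrm f} = 10^{\gamma/10}$, where $\gamma$ is the allowed gain loss in dB; the gain loss stays within $\gamma$ dB iff this ratio is at least $1/\gamma_{\mathrm f}$, i.e. iff the product in the claim is at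 least $1/\sqrt{\gamma_{\mathrm f}}$. $N_1,N_2$ are positive integers. *)

From Stdlib Require Import Reals Lra.
Open Scope R_scope.

(* Normalized array-factor magnitude of a uniform linear array of N elements
   at phase deviation z:  (1/N) |sin(N z/2)| / |sin(z/2)|.
   At the removable singularities sin(z/2) = 0 (e.g. z = 0) we use the
   continuous extension, whose value is 1. *)
Definition af (N : nat) (z : R) : R :=
  if Req_EM_T (sin (z / 2)) 0 then 1
  else / INR N * (Rabs (sin (INR N * z / 2)) / Rabs (sin (z / 2))).

(** The function [sin t / t] is nonincreasing on [(0, PI]], and for [0 < u]
    we have [sin u <= u]; hence if [N u <= a <= PI] then
    [sin (N u) / (N sin u) >= sin (N u) / (N u) >= sin a / a].
    With [u = |z/2|] this bounds each normalized array factor from below by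
    [sin alpha / alpha = gf^(-1/4)], and the product of the two bounds is
    [gf^(-1/2)]. *)
From Stdlib Require Import Reals Lra Lia.
From Coquelicot Require Import Coquelicot.
Open Scope R_scope.

Lemma is_derive_nonpos_antitone (f df : R -> R) (a b : R) :
  (forall t, a <= t <= b -> is_derive f t (df t)) ->
  (forall t, a <= t <= b -> df t <= 0) ->
  forall x y, a <= x -> x <= y -> y <= b -> f y <= f x.
Proof.
  intros Hf Hdf x y Hax Hxy Hyb.
  destruct (MVT_gen f x y df) as [c [Hc Hmvt]].
  - intros t Ht. rewrite Rmin_left, Rmax_right in Ht by lra. apply Hf; lra.
  - intros t Ht. rewrite Rmin_left, Rmax_right in Ht by lra.
    apply continuity_pt_filterlim, (ex_derive_continuous f).
    exists (df t). apply Hf; lra.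
  - rewrite Rmin_left, Rmax_right in Hc by lra.
    assert (Hdc : df c <= 0) by (apply Hdf; lra).
    nra.
Qed.

Lemma mul_cos_le_sin x : 0 <= x <= PI -> x * cos x <= sin x.
Proof.
  intros Hx.
  assert (Hmono := is_derive_nonpos_antitone
    (fun s => s * cos s - sin s) (fun s => - (s * sin s)) 0 PI).
  assert (H : x * cos x - sin x <= 0 * cos 0 - sin 0).
  { apply Hmono; try lra.
    - intros t _. auto_derive; [easy | ring].
    - intros t Ht. assert (0 <= sin t) by (apply sin_ge_0; lra). nra. }
  rewrite sin_0 in H. lra.
Qed.

Lemma sinc_antitone x y : 0 < x -> x <= y -> y <= PI -> sin y / y <= sin x / x.
Proof.
  intros Hx Hxy HyPI.
  apply (is_derive_nonpos_antitone
    (fun s => sin s / s) (fun s => (s * cos s - sin s) / (s * s)) x PI); try lra.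
  - intros t Ht. auto_derive; [lra | field; lra].
  - intros t Ht. assert (t * cos t <= sin t) by (apply mul_cos_le_sin; lra).
    apply Rmult_le_0_r; [lra |].
    apply Rlt_le, Rinv_0_lt_compat. nra.
Qed.

Lemma sin_le_id u : 0 <= u -> sin u <= u.
Proof.
  intros Hu. destruct (Req_dec u 0) as [-> | Hu0].
  - rewrite sin_0. lra.
  - apply Rlt_le, sin_lt_x. lra.
Qed.

Lemma sinc_le_1 a : 0 < a -> sin a / a <= 1.
Proof.
  intros Ha. apply (Rmult_le_reg_r a); [lra |].
  replace (sin a / a * a) with (sin a) by (field; lra).
  rewrite Rmult_1_l. apply sin_le_id. lra.
Qed.

Lemma Rabs_sin w : Rabs w <= PI -> Rabs (sin w) = sin (Rabs w).
Proof.
  intros Hw. destruct (Rle_or_lt 0 w) as [Hpos | Hneg].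
  - rewrite (Rabs_pos_eq w) in Hw |- * by lra.
    apply Rabs_pos_eq, sin_ge_0; lra.
  - rewrite (Rabs_left w) in Hw |- * by lra.
    rewrite sin_neg. apply Rabs_left1.
    assert (0 <= sin (- w)) by (apply sin_ge_0; lra).
    rewrite sin_neg in *. lra.
Qed.

Lemma sinc_le_dirichlet (N u a : R) :
  1 <= N -> 0 < u < PI -> N * u <= a <= PI ->
  sin a / a <= sin (N * u) / (N * sin u).
Proof.
  intros HN Hu Ha.
  assert (Hsu : 0 < sin u) by (apply sin_gt_0; lra).
  assert (HsNu : 0 <= sin (N * u)) by (apply sin_ge_0; nra).
  assert (Hsinc : sin a / a <= sin (N * u) / (N * u))
    by (apply sinc_antitone; nra).
  enough (sin (N * u) / (N * u) <= sin (N * u) / (N * sin u)) by lra.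
  apply Rmult_le_compat_l; [exact HsNu |].
  apply Rinv_le_contravar; [nra |].
  apply Rmult_le_compat_l; [lra |]. apply sin_le_id. lra.
Qed.

Lemma sinc_le_af (N : nat) (z a : R) :
  (0 < N)%nat -> 0 < a <= PI ->
  - (2 / INR N) * a <= z <= (2 / INR N) * a ->
  sin a / a <= af N z.
Proof.
  intros HN Ha Hz.
  assert (HN1 : 1 <= INR N) by (apply (le_INR 1); lia).
  unfold af. destruct (Req_EM_T (sin (z / 2)) 0) as [_ | Hs].
  { apply sinc_le_1. lra. }
  set (u := Rabs (z / 2)).
  assert (HNz : Rabs (INR N * z / 2) = INR N * u).
  { unfold u. replace (INR N * z / 2) with (INR N * (z / 2)) by field.
    rewrite Rabs_mult, (Rabs_pos_eq (INR N)) by lra. reflexivity. }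
  assert (HNu : INR N * u <= a).
  { unfold u. rewrite Rabs_div, (Rabs_pos_eq 2) by lra.
    assert (Habs : Rabs z <= 2 / INR N * a) by (apply Rabs_le; lra).
    apply (Rmult_le_compat_l (INR N / 2)) in Habs; [| apply Rdiv_le_0_compat; lra].
    replace (INR N / 2 * (2 / INR N * a)) with a in Habs by (field; lra).
    lra. }
  assert (Hu0 : 0 < u).
  { apply Rabs_pos_lt. intros Hz0. rewrite Hz0, sin_0 in Hs. lra. }
  assert (Hsin_u : Rabs (sin (z / 2)) = sin u) by (apply Rabs_sin; fold u; nra).
  assert (Hsu : 0 < sin u) by (rewrite <- Hsin_u; apply Rabs_pos_lt, Hs).
  assert (HuPI : u < PI).
  { destruct (Req_dec u PI) as [E | E]; [| nra].
    rewrite E, sin_PI in Hsu. lra. }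
  rewrite Hsin_u, Rabs_sin, HNz by (rewrite HNz; lra).
  replace (/ INR N * (sin (INR N * u) / sin u))
    with (sin (INR N * u) / (INR N * sin u)) by (field; lra).
  apply sinc_le_dirichlet; lra.
Qed.

Lemma Rpower_quarter_sqr x : 0 < x -> Rpower x (1 / 4) * Rpower x (1 / 4) = sqrt x.
Proof.
  intros Hx. rewrite <- Rpower_plus, <- Rpower_sqrt by exact Hx.
  f_equal. field.
Qed.

Theorem lemma2 (gf : R) (N1 N2 : nat) (alpha z1 z2 : R) :
  1 < gf ->
  (0 < N1)%nat -> (0 < N2)%nat ->
  0 <= alpha <= PI ->
  sin alpha / alpha = / Rpower gf (1 / 4) ->
  - (2 / INR N1) * alpha <= z1 <= (2 / INR N1) * alpha ->
  - (2 / INR N2) * alpha <= z2 <= (2 / INR N2) * alpha ->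
  af N1 z1 * af N2 z2 >= / sqrt gf.
Proof.
  intros Hgf HN1 HN2 Halpha Hroot Hz1 Hz2.
  assert (Hpos : 0 < / Rpower gf (1 / 4)) by apply Rinv_0_lt_compat, exp_pos.
  assert (Halpha0 : 0 < alpha).
  { destruct (Req_dec alpha 0) as [E | E]; [| lra].
    rewrite E, sin_0 in Hroot. unfold Rdiv in Hroot.
    rewrite Rmult_0_l in Hroot. lra. }
  assert (B1 := sinc_le_af N1 z1 alpha HN1 ltac:(lra) Hz1).
  assert (B2 := sinc_le_af N2 z2 alpha HN2 ltac:(lra) Hz2).
  rewrite Hroot in B1, B2.
  rewrite <- Rpower_quarter_sqr, Rinv_mult by lra.
  apply Rle_ge, Rmult_le_compat; lra.
Qed.
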